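(* Let $X$ and $Y$ be chains with $X$ bounded, let $F\colon X^*\to Y$ be a standard function, and let $a,b\in X$ with $a\leqslant b$. The following are equivalent. (i) (a) $F$ is preassociative and unarily quasi-range-idempotent; (b) there is a strictly increasing function $f\colon[a,b]\to Y$ with convex range such that $F_1(x)=f(\mathrm{med}(a,x,b))$ for all $x\in X$; (c) $F_2(x,x)=F_1(x)$ for every $x\in X$; (d) $F_2$ is nondecreasing in each argument; (e) the sets $\{F_2(x,z):x\in X\}$ and $\{F_2(z,x):x\in X\}$ are convex for every $z\in X$. (ii) (a) $F$ is preassociative and unarily quasi-range-idempotent; (b) there is a strictly increasing function $f\colon[a,b]\to Y$ with convex range such that $F_1(x)=f(\mathrm{med}(a,x,b))$ for all $x\in X$; (c) for every integer $n\geqslant 2$, $F_n(x,\ldots,x)=F_1(x)$ for every $x\in X$; (d) for every integer $n\geqslant 2$, $F_n$ is nondecreasing in each argument; (e) for every integer $n\geqslant 2$, every $0\leqslant i\leqslant n-1$, every $\mathbf{y}\in X^i$ and $\mathbf{z}\in X^{n-1-i}$, the set $\{F_n(\mathbf{y},x,\mathbf{z}):x\in X\}$ is convex. (iii) There exist $c,d\in[a,b]$ and a strictly increasing function $f\colon[a,b]\to Y$ with convex range such that for every $n\geqslant 1$, $$F_n(x_1,\ldots,x_n)=f\Big(\mathrm{med}\Big(a,\,(c\wedge x_1)\vee\mathrm{med}\Big(\bigwedge_{i=1}^n x_i,\,c\wedge d,\,\bigvee_{i=1}^n x_i\Big)\vee(d\wedge x_n),\,b\Big)\Big).$$ In this case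 $f=F_1|_{[a,b]}$.
   Context: $X^*=\bigcup_{n\geqslant 0}X^n$ is the set of finite tuples over $X$, $X^0=\{\varepsilon\}$ with $\varepsilon$ the empty tuple; $F(\mathbf{x},\mathbf{y})$ denotes $F$ applied to the concatenation, concatenation with $\varepsilon$ leaving tuples unchanged. $F_n=F|_{X^n}$, $F^{\flat}=F|_{X^*\setminus\{\varepsilon\}}$. $F$ is standard if $F(\mathbf{x})=F(\varepsilon)$ only for $\mathbf{x}=\varepsilon$. $F$ is preassociative if for all tuples $\mathbf{x},\mathbf{y},\mathbf{y}',\mathbf{z}$, $F(\mathbf{y})=F(\mathbf{y}')$ implies $F(\mathbf{x},\mathbf{y},\mathbf{z})=F(\mathbf{x},\mathbf{y}',\mathbf{z})$. $F$ is unarily quasi-range-idempotent if $\mathrm{ran}(F_1)=\mathrm{ran}(F^{\flat})$. In the chain $X$, $\wedge,\vee$ denote min and max, $[a,b]=\{x\in X: a\leqslant x\leqslant b\}$, and $\mathrm{med}(x,y,z)=(x\vee y)\wedge(y\vee z)\wedge(z\vee x)$. A subset $S$ of a chain is convex if $s,s'\in S$ and $s<t<s'$ imply $t\in S$. *)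

From HB Require Import structures.
From mathcomp Require Import all_boot all_order.
Set Implicit Arguments. Unset Strict Implicit. Unset Printing Implicit Defensive.
Import Order.TTheory.
Local Open Scope order_scope.

(* Tuples over X are represented by sequences [seq X]; F_n is F on sequences of size n. *)

Section Defs.
Context {dX dY : Order.disp_t} {X : orderType dX} {Y : orderType dY}.

Definition standard (F : seq X -> Y) : Prop :=
  forall s, F s = F [::] -> s = [::].

Definition preassociative (F : seq X -> Y) : Prop :=
  forall x y y' z : seq X, F y = F y' -> F (x ++ y ++ z) = F (x ++ y' ++ z).

Definition unarily_quasi_range_idempotent (F : seq X -> Y) : Prop :=
  forall t : Y, (exists x : X, F [:: x] = t) <-> (exists s, s <> [::] /\ F s = t).

Definition convex {d} {T : orderType d} (S : T -> Prop) : Prop :=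
  forall s s' t, S s -> S s' -> s < t -> t < s' -> S t.

Definition nondecreasing_n (F : seq X -> Y) (n : nat) : Prop :=
  forall (y z : seq X) (x x' : X), size y + (size z).+1 = n ->
    x <= x' -> F (y ++ x :: z) <= F (y ++ x' :: z).

Definition convex_sections_n (F : seq X -> Y) (n : nat) : Prop :=
  forall (y z : seq X), size y + (size z).+1 = n ->
    convex (fun t : Y => exists x : X, F (y ++ x :: z) = t).

(* f : [a,b] -> Y strictly increasing with convex range (f given as total map,
   only its values on [a,b] matter) *)
Definition strictly_increasing_on (a b : X) (f : X -> Y) : Prop :=
  forall x y, a <= x -> y <= b -> x < y -> f x < f y.

Definition convex_range_on (a b : X) (f : X -> Y) : Prop :=
  convex (fun t : Y => exists x, a <= x <= b /\ f x = t).

End Defs.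

Definition med {d} {T : orderType d} (x y z : T) : T :=
  Order.min (Order.min (Order.max x y) (Order.max y z)) (Order.max z x).

From HB Require Import structures.
From mathcomp Require Import all_boot all_order.
Set Implicit Arguments.
Unset Strict Implicit.
Unset Printing Implicit Defensive.
Import Order.TTheory.
Local Open Scope order_scope.

(* By preassociativity, F(x_1, ..., x_n) = f(G(...G(G(x_1, x_2), x_3)..., x_n)) for the
   binary operation G with F(x, y) = f(G(x, y)). Under (i), G restricted to [a,b] is an
   associative, idempotent, nondecreasing operation whose sections have the intermediate
   value property. Such an operation is pinned down by c = G(b, a) and d = G(a, b): one
   gets G(a, y) = d /\ y and G(x, b) = x \/ d, hence G(x, y) = (c /\ x) \/ (x /\ y) \/ (d /\ y)
   for x <= y, and symmetrically for y < x. Folding this operation over a tuple gives the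
   closed formula of (iii). Conversely, every section x |-> F_n(y, x, z) of the formula is
   f composed with a clamp x |-> (x /\ v) \/ u, which is monotone and has convex range. *)

(* Proves (in)equalities between lattice terms over a chain, after distributing meets
   over joins, by matching atoms against each other and against hypotheses. *)
Ltac lat_atom := lazymatch goal with
  | |- is_true (?x `&` ?y <= ?z) =>
      first [ apply: le_refl | assumption
            | (apply: leIxl; lat_atom) | (apply: leIxr; lat_atom) ]
  | _ => first [ apply: le_refl | assumption ] end.

Ltac lat_le := lazymatch goal with
  | |- is_true (?x <= ?y `&` ?z) => rewrite lexI; apply/andP; split; lat_le
  | |- is_true (?x `|` ?y <= ?z) => rewrite leUx; apply/andP; split; lat_le
  | |- is_true (?x <= ?y `|` ?z) =>
      first [ (apply: lexUl; lat_le) | (apply: lexUr; lat_le) | lat_atom ]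
  | _ => lat_atom end.

Ltac lat_eq := rewrite ?(meetUl, meetUr); apply: le_anti; apply/andP; split; lat_le.

Section Median.
Context {dT : Order.disp_t} {T : orderType dT}.
Implicit Types (a b c d x y z : T).

Lemma medE x y z : med x y z = ((x `|` y) `&` (y `|` z)) `&` (z `|` x).
Proof. by rewrite /med -!meetEtotal -!joinEtotal. Qed.

Lemma med_ordered x y z : x <= z -> med x y z = x `|` (y `&` z).
Proof. by move=> xz; rewrite medE; lat_eq. Qed.

Lemma med_clamp a b x : a <= b -> med a x b = (x `&` b) `|` a.
Proof. by move=> ab; rewrite medE; lat_eq. Qed.

Context {a b : T} (hab : a <= b).

Lemma med_clamp_in x : a <= med a x b <= b.
Proof. by rewrite med_clamp // leUr /= leUx hab andbT leIr. Qed.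

Lemma med_clamp_id x : a <= x <= b -> med a x b = x.
Proof. by case/andP=> ax xb; rewrite med_clamp // (meet_idPl xb) (join_idPl ax). Qed.

Lemma med_clampI x y : med a (x `&` y) b = med a x b `&` med a y b.
Proof. by rewrite !med_clamp //; lat_eq. Qed.

Lemma med_clampU x y : med a (x `|` y) b = med a x b `|` med a y b.
Proof. by rewrite !med_clamp //; lat_eq. Qed.

End Median.

Section Clamp.
Context {dT : Order.disp_t} {T : orderType dT}.
Implicit Types (phi psi : T -> T).

Definition is_clamp phi := exists u v, u <= v /\ phi =1 (fun x => (x `&` v) `|` u).

Lemma clamp_ext phi psi : phi =1 psi -> is_clamp psi -> is_clamp phi.
Proof. by move=> e [u [v [uv h]]]; exists u, v; split=> // x; rewrite e h. Qed.

Lemma clamp_const k : is_clamp (fun _ => k).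
Proof. by exists k, k; split=> // x; lat_eq. Qed.

Lemma clamp_med a b : a <= b -> is_clamp (fun x => med a x b).
Proof. by move=> ab; exists a, b; split=> // x; exact: med_clamp. Qed.

Lemma clamp_meet phi psi : is_clamp phi -> is_clamp psi -> is_clamp (fun x => phi x `&` psi x).
Proof.
move=> [u [v [uv hp]]] [u' [v' [uv' hq]]]; exists (u `&` u'), (v `&` v'); split.
  exact: leI2.
by move=> x; rewrite hp hq; lat_eq.
Qed.

Lemma clamp_join phi psi : is_clamp phi -> is_clamp psi -> is_clamp (fun x => phi x `|` psi x).
Proof.
move=> [u [v [uv hp]]] [u' [v' [uv' hq]]]; exists (u `|` u'), (v `|` v'); split.
  exact: leU2.
by move=> x; rewrite hp hq; lat_eq.
Qed.

Lemma clamp_homo phi : is_clamp phi -> {homo phi : x y / x <= y}.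
Proof. by move=> [u [v [_ hp]]] x y xy; rewrite !hp; apply: leU2 => //; apply: leI2. Qed.

Lemma clamp_fix phi x y t : is_clamp phi -> phi x <= t -> t <= phi y -> phi t = t.
Proof.
move=> [u [v [uv hp]]]; rewrite !hp => h1 h2.
have ut : u <= t by exact: le_trans (leUr _ _) h1.
have tv : t <= v by apply: le_trans h2 _; rewrite leUx uv andbT leIr.
by rewrite (meet_idPl tv) (join_idPl ut).
Qed.

End Clamp.

Section StrictlyIncreasing.
Context {dX dY : Order.disp_t} {X : orderType dX} {Y : orderType dY}.
Variables (a b : X) (f : X -> Y) (finc : strictly_increasing_on a b f).

Lemma sinc_le_mono x y : a <= x <= b -> a <= y <= b -> (f x <= f y) = (x <= y).
Proof.
case/andP=> ax xb /andP[ay yb].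
case: (ltgtP x y) => [xy|yx|->]; last by rewrite lexx.
- by rewrite ltW ?finc.
- by rewrite leNgt finc.
Qed.

Lemma sinc_inj x y : a <= x <= b -> a <= y <= b -> f x = f y -> x = y.
Proof.
by move=> hx hy e; apply/le_anti; rewrite -(sinc_le_mono hx hy) -(sinc_le_mono hy hx) e lexx.
Qed.

Variables (g : X -> X) (G : X -> Y).
Hypotheses (g_in : forall x, a <= g x <= b) (G_fg : forall x, G x = f (g x)).

Lemma sinc_homo_reflect : {homo G : x y / x <= y} -> {homo g : x y / x <= y}.
Proof. by move=> hG x y xy; rewrite -sinc_le_mono // -!G_fg hG. Qed.

Definition intermediate_values (h : X -> X) :=
  forall x1 x2 t, h x1 < t -> t < h x2 -> exists x, h x = t.

Lemma sinc_intermediate_values :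
  convex (fun t => exists x, G x = t) -> intermediate_values g.
Proof.
move=> hconv x1 x2 t lt1 lt2.
have /andP[a1 _] := g_in x1; have /andP[_ b2] := g_in x2.
have a_t : a <= t by exact: le_trans a1 (ltW lt1).
have tb : t <= b by exact: le_trans (ltW lt2) b2.
have [x hx] : exists x, G x = f t.
  apply: hconv (ex_intro _ x1 erefl) (ex_intro _ x2 erefl) _ _; rewrite G_fg.
    exact: finc a1 tb lt1.
  exact: finc a_t b2 lt2.
by exists x; apply: sinc_inj; rewrite ?a_t ?tb // -hx G_fg.
Qed.

Lemma sinc_clamp_convex : convex_range_on a b f -> is_clamp g ->
  convex (fun t => exists x, G x = t).
Proof.
move=> hcr gc _ _ t [x1 <-] [x2 <-]; rewrite !G_fg => lt1 lt2.
have [q [hq ft]] := hcr _ _ t (ex_intro _ (g x1) (conj (g_in x1) erefl))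
  (ex_intro _ (g x2) (conj (g_in x2) erefl)) lt1 lt2.
subst t; exists q; rewrite G_fg; congr f; apply: (clamp_fix (x := x1) (y := x2) gc).
  by rewrite -sinc_le_mono ?g_in //; exact: ltW.
by rewrite -sinc_le_mono ?g_in //; exact: ltW.
Qed.

End StrictlyIncreasing.

Section CDOperation.
Context {dT : Order.disp_t} {T : orderType dT}.
Implicit Types (a b c d x y z : T).

(* Czogala-Drewniak form of an idempotent, associative, nondecreasing operation on a chain. *)
Definition cd_op c d x y := ((c `&` x) `|` (x `&` y)) `|` (d `&` y).

Lemma cd_op_idem c d x : cd_op c d x x = x.
Proof. by rewrite /cd_op; lat_eq. Qed.

Lemma cd_op_assoc c d x y z : cd_op c d (cd_op c d x y) z = cd_op c d x (cd_op c d y z).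
Proof. by rewrite /cd_op; lat_eq. Qed.

Lemma cd_op_flip c d x y : cd_op c d x y = cd_op d c y x.
Proof. by rewrite /cd_op; lat_eq. Qed.

Lemma clamp_cd_op c d (phi psi : T -> T) : is_clamp phi -> is_clamp psi ->
  is_clamp (fun x => cd_op c d (phi x) (psi x)).
Proof.
move=> h1 h2; rewrite /cd_op.
by apply: clamp_join; [apply: clamp_join|]; apply: clamp_meet => //; exact: clamp_const.
Qed.

Lemma med_cd_op a b c d x y : a <= c <= b -> a <= d <= b ->
  med a (cd_op c d x y) b = cd_op c d (med a x b) (med a y b).
Proof.
move=> hc hd; have hab : a <= b by case/andP: hc => ac cb; exact: le_trans ac cb.
by rewrite /cd_op !(med_clampU, med_clampI) // (med_clamp_id hab hc) (med_clamp_id hab hd).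
Qed.

End CDOperation.

Section ChainBand.
Context {dT : Order.disp_t} {T : orderType dT}.

Record chain_band (a b : T) (op : T -> T -> T) : Prop := ChainBand {
  band_assoc : associative op;
  band_idem : forall x, a <= x <= b -> op x x = x;
  band_homol : forall y x x', x <= x' -> op x y <= op x' y;
  band_homor : forall x y y', y <= y' -> op x y <= op x y';
  band_ivtl : forall y, intermediate_values (op^~ y);
  band_ivtr : forall x, intermediate_values (op x) }.

Lemma chain_band_flip a b op : chain_band a b op -> chain_band a b (fun x y => op y x).
Proof.
by case=> hA hI hL hR hVL hVR; split=> // x y z; rewrite hA.
Qed.

Section Band.
Variables (a b : T) (op : T -> T -> T) (hop : chain_band a b op).

Lemma band_absl x y : a <= x <= b -> op x (op x y) = op x y.
Proof. by move=> hx; rewrite (band_assoc hop) (band_idem hop hx). Qed.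

Lemma band_absr x y : a <= y <= b -> op (op x y) y = op x y.
Proof. by move=> hy; rewrite -(band_assoc hop) (band_idem hop hy). Qed.

Lemma band_a_left y : a <= y <= b -> op a y = op a b `&` y.
Proof.
move=> hy; have /andP[ay yb] := hy.
have ha : a <= a <= b by rewrite lexx (le_trans ay yb).
apply/le_anti/andP; split.
  rewrite lexI (band_homor hop _ yb) /=.
  by rewrite -{2}(band_idem hop hy); apply: (band_homol hop).
case: (leP (op a b) y) => [dy|yd].
  by rewrite -(band_absl b ha); apply: (band_homor hop).
move: ay; rewrite [a <= y]le_eqVlt => /orP[/eqP<-|ay]; first by rewrite (band_idem hop ha).
have aa : op a a < y by rewrite (band_idem hop ha).
have [w <-] := band_ivtr hop aa yd.
by rewrite band_absl.
Qed.

Lemma band_b_right x : a <= x <= b -> op x b = x `|` op a b.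
Proof.
move=> hx; have /andP[ax xb] := hx.
have hb : a <= b <= b by rewrite lexx (le_trans ax xb).
apply/le_anti/andP; split; last first.
  rewrite leUx (band_homol hop _ ax) andbT.
  by rewrite -{1}(band_idem hop hx); apply: (band_homor hop).
case: (leP x (op a b)) => [xd|dx].
  by rewrite -(band_absr a hb); apply: (band_homol hop).
move: xb; rewrite [x <= b]le_eqVlt => /orP[/eqP->|xb]; first by rewrite (band_idem hop hb).
have bb : x < op b b by rewrite (band_idem hop hb).
have [w <-] := band_ivtl hop dx bb.
by rewrite band_absr.
Qed.

Lemma band_cd_le x y : a <= x -> x <= y -> y <= b ->
  op x y = cd_op (op b a) (op a b) x y.
Proof.
move=> ax xy yb.
have hx : a <= x <= b by rewrite ax (le_trans xy yb).
have hy : a <= y <= b by rewrite yb (le_trans ax xy).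
have lo : (op a b `&` y) `|` x <= op x y.
  rewrite leUx -(band_a_left hy) (band_homol hop _ ax) /=.
  by rewrite -{1}(band_idem hop hx); apply: (band_homor hop).
have up : op x y <= (x `|` op a b) `&` y.
  rewrite lexI -(band_b_right hx) (band_homor hop _ yb) /=.
  by rewrite -{2}(band_idem hop hy); apply: (band_homol hop).
apply/le_anti/andP; split.
  by apply: le_trans up _; rewrite /cd_op meetUl; lat_le.
by apply: le_trans lo; rewrite /cd_op; lat_le.
Qed.

End Band.

Lemma band_cd a b op : chain_band a b op -> forall x y, a <= x <= b -> a <= y <= b ->
  op x y = cd_op (op b a) (op a b) x y.
Proof.
move=> hop x y /andP[ax xb] /andP[ay yb].
case: (leP x y) => [xy|/ltW yx]; first exact: band_cd_le.
by rewrite cd_op_flip; exact: (band_cd_le (chain_band_flip hop)).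
Qed.

End ChainBand.

Section ClosedFormula.
Context {dX dY : Order.disp_t} {X : tbOrderType dX} {Y : orderType dY}.
Variables (a b c d : X) (hab : a <= b) (hc : a <= c <= b) (hd : a <= d <= b).

Definition cd_mean (s : seq X) : X :=
  med a (Order.max (Order.max (Order.min c (head a s))
            (med (\meet_(x <- s) x) (Order.min c d) (\join_(x <- s) x)))
          (Order.min d (last a s))) b.

Lemma cd_mean_in s : a <= cd_mean s <= b.
Proof. exact: med_clamp_in. Qed.

Lemma cd_meanE s : s != [::] -> cd_mean s =
  med a (((c `&` head a s) `|` ((\meet_(x <- s) x) `|` ((c `&` d) `&` \join_(x <- s) x)))
          `|` (d `&` last a s)) b.
Proof.
case: s => // x s _; rewrite /cd_mean -!meetEtotal -!joinEtotal.
rewrite [med (\meet_(_ <- _) _) _ _]med_ordered //.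
exact: le_trans (meets_inf_seq _ (mem_head _ _) isT) (joins_sup_seq _ (mem_head _ _) isT).
Qed.

Lemma cd_mean1 x : cd_mean [:: x] = med a x b.
Proof. by rewrite cd_meanE // !big_seq1 /=; congr (med a _ b); lat_eq. Qed.

Lemma cd_mean_rcons s w : s != [::] ->
  cd_mean (rcons s w) = cd_op c d (cd_mean s) (med a w b).
Proof.
case: s => // x s _.
have mh : \meet_(y <- x :: s) y <= x := meets_inf_seq _ (mem_head _ _) isT.
have lj : last x s <= \join_(y <- x :: s) y := joins_sup_seq _ (mem_last _ _) isT.
rewrite !cd_meanE // -med_cd_op //; congr (med a _ b).
by rewrite last_rcons !big_rcons /= /cd_op; lat_eq.
Qed.

Lemma cd_mean_cat s t : s != [::] -> t != [::] ->
  cd_mean (s ++ t) = cd_op c d (cd_mean s) (cd_mean t).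
Proof.
move=> sn; elim/last_ind: t => // t w IH _.
have [->|tn] := eqVneq t [::]; first by rewrite cats1 cd_mean_rcons // cd_mean1.
have stn : s ++ t != [::] by case: s sn {IH}.
by rewrite -rcons_cat !cd_mean_rcons // IH // cd_op_assoc.
Qed.

Lemma cd_mean_nseq n x : cd_mean (nseq n.+1 x) = med a x b.
Proof.
elim: n => [|n IH]; first exact: cd_mean1.
have -> : nseq n.+2 x = rcons (nseq n.+1 x) x by elim: n {IH} => //= n ->.
by rewrite cd_mean_rcons // IH cd_op_idem.
Qed.

Lemma cd_mean_section_clamp (y z : seq X) : is_clamp (fun x => cd_mean (y ++ x :: z)).
Proof.
have h1 : is_clamp (fun x => cd_mean [:: x]) by exact: clamp_ext cd_mean1 (clamp_med hab).
have hx : is_clamp (fun x => cd_mean (x :: z)).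
  have [->//|zn] := eqVneq z [::].
  have e x : cd_mean (x :: z) = cd_op c d (cd_mean [:: x]) (cd_mean z).
    exact: (cd_mean_cat (s := [:: x])).
  apply: (clamp_ext e).
  exact: clamp_cd_op h1 (clamp_const _).
have [->//|yn] := eqVneq y [::].
have e x : cd_mean (y ++ x :: z) = cd_op c d (cd_mean y) (cd_mean (x :: z)).
  exact: cd_mean_cat.
apply: (clamp_ext e).
exact: clamp_cd_op (clamp_const _) hx.
Qed.

Lemma cd_mean_preassoc (x y y' z : seq X) : y != [::] -> y' != [::] ->
  cd_mean y = cd_mean y' -> cd_mean (x ++ y ++ z) = cd_mean (x ++ y' ++ z).
Proof.
move=> yn y'n e.
have catz w : w != [::] -> w ++ z != [::] by case: w.
have ez : cd_mean (y ++ z) = cd_mean (y' ++ z).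
  have [->|zn] := eqVneq z [::]; first by rewrite !cats0.
  by rewrite !cd_mean_cat // e.
have [->//|xn] := eqVneq x [::].
by rewrite !(cd_mean_cat xn) ?catz // ez.
Qed.

Variables (F : seq X -> Y) (f : X -> Y) (finc : strictly_increasing_on a b f).
Hypothesis hform : forall s, s <> [::] -> F s = f (cd_mean s).

Lemma formula_F1 x : F [:: x] = f (med a x b).
Proof. by rewrite hform // cd_mean1. Qed.

Lemma formula_preassociative : standard F -> preassociative F.
Proof.
move=> hF x y y' z e.
have [y0|yn] := eqVneq y [::].
  by rewrite y0 in e *; rewrite (hF y' (esym e)).
have [y'0|y'n] := eqVneq y' [::].
  by rewrite y'0 in e; rewrite (hF y e) eqxx in yn.
have ey : cd_mean y = cd_mean y'.
  by apply: (sinc_inj finc); rewrite ?cd_mean_in // -!hform //; apply/eqP.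
have nonempty w : w != [::] -> x ++ w ++ z <> [::] by case: x; case: w.
by rewrite (hform (nonempty _ yn)) (hform (nonempty _ y'n)) (cd_mean_preassoc x z yn y'n ey).
Qed.

Lemma formula_uqri : unarily_quasi_range_idempotent F.
Proof.
move=> t; split=> [[x <-]|[s [sn <-]]]; first by exists [:: x].
by exists (cd_mean s); rewrite formula_F1 hform // med_clamp_id ?cd_mean_in.
Qed.

Lemma formula_nseq n x : F (nseq n.+1 x) = F [:: x].
Proof. by rewrite hform // cd_mean_nseq formula_F1. Qed.

Lemma formula_nondecreasing n : nondecreasing_n F n.
Proof.
move=> y z x x' _ xx'; have ne u : y ++ u :: z <> [::] by case: y.
rewrite (hform (ne x)) (hform (ne x')) (sinc_le_mono finc) ?cd_mean_in //.
exact: (clamp_homo (cd_mean_section_clamp y z)).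
Qed.

Lemma formula_convex_sections n : convex_range_on a b f -> convex_sections_n F n.
Proof.
move=> hcr y z _; apply: (sinc_clamp_convex finc (g := fun x => cd_mean (y ++ x :: z))) => //.
- by move=> ?; exact: cd_mean_in.
- by move=> u; rewrite hform //; case: y.
exact: cd_mean_section_clamp.
Qed.

End ClosedFormula.

Section BinaryReduction.
Context {dX dY : Order.disp_t} {X : tbOrderType dX} {Y : orderType dY}.
Variables (a b : X) (hab : a <= b) (F : seq X -> Y) (f : X -> Y).
Hypotheses (hpre : preassociative F) (hqri : unarily_quasi_range_idempotent F)
  (finc : strictly_increasing_on a b f) (hF1 : forall x, F [:: x] = f (med a x b))
  (hc2 : forall x, F [:: x; x] = F [:: x]) (hd2 : nondecreasing_n F 2)
  (he2 : convex_sections_n F 2).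

Lemma F1_in x : a <= x <= b -> F [:: x] = f x.
Proof. by move=> hx; rewrite hF1 med_clamp_id. Qed.

Lemma F2_value x y : exists q, (a <= q <= b) && (F [:: x; y] == f q).
Proof.
have : exists s, s <> [::] /\ F s = F [:: x; y] by exists [:: x; y].
move/hqri => [x0 hx0]; exists (med a x0 b).
by rewrite med_clamp_in // -hx0 hF1 eqxx.
Qed.

Definition op2 x y := xchoose (F2_value x y).

Lemma op2_in x y : a <= op2 x y <= b.
Proof. by have /andP[] := xchooseP (F2_value x y). Qed.

Lemma F2_op2 x y : F [:: x; y] = f (op2 x y).
Proof. by have /andP[_ /eqP] := xchooseP (F2_value x y). Qed.

Lemma F1_op2 x y : F [:: op2 x y] = F [:: x; y].
Proof. by rewrite F1_in ?op2_in // F2_op2. Qed.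

Lemma op2_medr x y : op2 x y = op2 x (med a y b).
Proof.
apply: (sinc_inj finc) (op2_in _ _) (op2_in _ _) _; rewrite -!F2_op2.
have e : F [:: y] = F [:: med a y b] by rewrite hF1 F1_in ?med_clamp_in.
exact: (hpre [:: x] [::] e).
Qed.

Lemma op2_chain_band : chain_band a b op2.
Proof.
split.
- move=> x y z; apply: (sinc_inj finc) (op2_in _ _) (op2_in _ _) _; rewrite -!F2_op2.
  have := hpre [::] [:: z] (esym (F1_op2 x y)).
  have := hpre [:: x] [::] (esym (F1_op2 y z)).
  by rewrite /= => <- <-.
- by move=> x hx; apply: (sinc_inj finc (op2_in _ _) hx); rewrite -F2_op2 hc2 F1_in.
- move=> y; apply: (sinc_homo_reflect finc (g := op2^~ y) (G := fun x => F [:: x; y])).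
  + by move=> ?; exact: op2_in.
  + by move=> ?; exact: F2_op2.
  + by move=> x x'; exact: (@hd2 [::] [:: y] _ _ erefl).
- move=> x; apply: (sinc_homo_reflect finc (g := op2 x) (G := fun y => F [:: x; y])).
  + exact: op2_in.
  + exact: F2_op2.
  + by move=> y y'; exact: (@hd2 [:: x] [::] _ _ erefl).
- move=> y; apply: (sinc_intermediate_values finc (g := op2^~ y) (G := fun x => F [:: x; y])).
  + by move=> ?; exact: op2_in.
  + by move=> ?; exact: F2_op2.
  + exact: (@he2 [::] [:: y] erefl).
- move=> x; apply: (sinc_intermediate_values finc (g := op2 x) (G := fun y => F [:: x; y])).
  + exact: op2_in.
  + exact: F2_op2.
  + exact: (@he2 [:: x] [::] erefl).
Qed.

Lemma cd_mean_representation : exists c d, [/\ a <= c <= b, a <= d <= b &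
  forall s, s <> [::] -> F s = f (cd_mean a b c d s)].
Proof.
have hc := op2_in b a; have hd := op2_in a b.
exists (op2 b a), (op2 a b); split=> //.
elim/last_ind => // t w IH _.
have [->|tn] := eqVneq t [::]; first by rewrite /= cd_mean1.
have e : F t = F [:: cd_mean a b (op2 b a) (op2 a b) t].
  by rewrite IH ?F1_in ?cd_mean_in //; exact/eqP.
rewrite cd_mean_rcons //.
have := hpre [::] [:: w] e; rewrite /= cats1 => ->.
by rewrite F2_op2 op2_medr (band_cd op2_chain_band) ?cd_mean_in ?med_clamp_in.
Qed.

End BinaryReduction.

Theorem theorem5p8 (dX dY : Order.disp_t) (X : tbOrderType dX) (Y : orderType dY)
  (F : seq X -> Y) (hF : standard F) (a b : X) (hab : a <= b) :
  let cond_i :=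
    [/\ preassociative F /\ unarily_quasi_range_idempotent F,
        (exists f : X -> Y, [/\ strictly_increasing_on a b f, convex_range_on a b f &
             forall x, F [:: x] = f (med a x b)]),
        (forall x, F [:: x; x] = F [:: x]),
        nondecreasing_n F 2 &
        convex_sections_n F 2] in
  let cond_ii :=
    [/\ preassociative F /\ unarily_quasi_range_idempotent F,
        (exists f : X -> Y, [/\ strictly_increasing_on a b f, convex_range_on a b f &
             forall x, F [:: x] = f (med a x b)]),
        (forall n, (2 <= n)%N -> forall x, F (nseq n x) = F [:: x]),
        (forall n, (2 <= n)%N -> nondecreasing_n F n) &
        (forall n, (2 <= n)%N -> convex_sections_n F n)] in
  let formula_iii (c d : X) (f : X -> Y) :=
    forall s : seq X, s <> [::] ->
      F s = f (med a
                 (Order.max (Order.max (Order.min c (head a s))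
                      (med (\meet_(x <- s) x) (Order.min c d) (\join_(x <- s) x)))
                    (Order.min d (last a s)))
                 b) in
  let cond_iii :=
    exists (c d : X) (f : X -> Y),
      [/\ a <= c <= b, a <= d <= b, strictly_increasing_on a b f,
          convex_range_on a b f & formula_iii c d f] in
  [/\ cond_i <-> cond_ii, cond_ii <-> cond_iii &
      forall (c d : X) (f : X -> Y), a <= c <= b -> a <= d <= b ->
        strictly_increasing_on a b f -> convex_range_on a b f ->
        formula_iii c d f -> forall x, a <= x <= b -> f x = F [:: x]].
Proof.
move=> cond_i cond_ii formula_iii cond_iii.
have i_iii : cond_i -> cond_iii.
  case=> [[hpre hqri] [f [finc hcr hF1]] hc2 hd2 he2].
  have [c [d [hc hd hform]]] := cd_mean_representation hab hpre hqri finc hF1 hc2 hd2 he2.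
  by exists c, d, f.
have iii_ii : cond_iii -> cond_ii.
  case=> c [d [f [hc hd finc hcr hform]]]; split.
  - split; first exact: (formula_preassociative hab hc hd finc hform hF).
    exact: (formula_uqri hab hform).
  - by exists f; split=> //; exact: (formula_F1 hform).
  - by case=> // n _ x; exact: (formula_nseq hc hd hform).
  - by move=> n _; exact: (formula_nondecreasing hab hc hd finc hform).
  - by move=> n _; exact: (formula_convex_sections hab hc hd finc hform hcr).
have ii_i : cond_ii -> cond_i.
  by case=> h1 h2 h3 h4 h5; split=> //; [exact: h3 2 isT | exact: h4 | exact: h5].
split; [by split=> [/i_iii/iii_ii|/ii_i] | by split=> [/ii_i/i_iii|/iii_ii] |].
move=> c d f hc hd finc hcr hform x hx.
by rewrite (hform [:: x]) // -/(cd_mean a b c d [:: x]) cd_mean1 // med_clamp_id.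
Qed.
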